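(* Let $\{\xi_k\}$ be the sequence produced by Algorithm DFNDFL (described in the context). Then \[ \lim_{k\to\infty} \xi_k = 0. \]
   Context: Consider the problem $\min f(x)$ s.t. $x\in X\cap\mathcal{Z}$, where $X=\{x\in\mathbb{R}^n: l\le x\le u\}$ is compact (with $l_i<u_i$, and $l_i,u_i\in\mathbb{Z}$ for $i\in I^z$), $\mathcal{Z}=\{x\in\mathbb{R}^n: x_i\in\mathbb{Z},\ i\in I^z\}$, $I^c\cup I^z=\{1,\dots,n\}$, $I^c\cap I^z=\emptyset$, and $f$ is continuous (Lipschitz continuous with respect to $x_i$, $i\in I^c$). Discrete Search$(\tilde\alpha,w,p,\xi;\alpha)$: compute the largest $\bar\alpha$ with $w+\bar\alpha p\in X\cap\mathcal{Z}$, set $\alpha=\min\{\bar\alpha,\tilde\alpha\}$; if $\alpha>0$ and $f(w+\alpha p)\le f(w)-\xi$, repeatedly set $\beta=\min\{\bar\alpha,2\alpha\}$ and, while $f(w+\beta p)\le f(w)-\xi$, set $\alpha=\beta$, then return $\alpha$; otherwise return $\alpha=0$. Algorithm DFNDFL: start from $x_0\in X\cap\mathcal{Z}$, $\xi_0>0$, $\theta\in(0,1)$. At iteration $k$, Phase 1 performs a projected line search along a continuous direction producing $\tilde x_k\in X\cap\mathcal{Z}$ with $f(\tilde x_k)\le f(x_k)$. Phase 2.A sets $y^+=\tilde x_k$ and, while the working set $D$ of feasible primitive integer directions (directions $d\in\mathbb{Z}^n$ with $d_i=0$ for $i\in I^c$, $d_z$ having greatest common divisor of components equal to 1, and $\tilde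 x_k+d\in X\cap\mathcal{Z}$) is nonempty and $y^+=\tilde x_k$, picks $d\in D$, removes it, and runs the Discrete Search from $y=y^+$ along $d$ with tentative step $\tilde\alpha_k^{(d)}$ and decrease parameter $\xi_k$; on success $y^+=y+\alpha d$ (so $f(y^+)\le f(\tilde x_k)-\xi_k$), on failure $\tilde\alpha_{k+1}^{(d)}=\max\{1,\lfloor\tilde\alpha_k^{(d)}/2\rfloor\}$. Phase 2.B: if $y^+=\tilde x_k$ and the Discrete Search fails with tentative step $\tilde\alpha_k^{(d)}=1$ for all $d$ in the current direction set $D_k$, set $\xi_{k+1}=\theta\xi_k$ (and possibly enlarge $D_k$ with new feasible primitive directions); otherwise $\xi_{k+1}=\xi_k$. Phase 3 chooses any $x_{k+1}\in X\cap\mathcal{Z}$ with $f(x_{k+1})\le f(y^+)$. *)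

From HB Require Import structures.
From mathcomp Require Import all_boot all_order all_algebra.
From mathcomp Require Import all_classical all_reals all_analysis.
Set Implicit Arguments.
Unset Strict Implicit.
Unset Printing Implicit Defensive.
Import Order.TTheory GRing.Theory Num.Theory.
Import numFieldNormedType.Exports.
Local Open Scope ring_scope.

Section DFNDFL.
Variables (R : realType) (n : nat) (Iz : {set 'I_n}) (l u : 'I_n -> R).
Variable f : 'rV[R]_n -> R.

Definition inXZ (x : 'rV[R]_n) : Prop :=
  forall i, l i <= x 0 i <= u i /\ (i \in Iz -> x 0 i \is a Num.int).

Definition dirR (d : 'rV[int]_n) : 'rV[R]_n := map_mx (fun z : int => z%:~R) d.

Definition primitive_dir (d : 'rV[int]_n) : Prop :=
  (forall i, i \notin Iz -> d 0 i = 0) /\ \big[gcdz/0%Z]_(i in Iz) d 0 i = 1%Z.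

Definition largest_step (w p : 'rV[R]_n) (abar : R) : Prop :=
  0 <= abar /\ inXZ (w + abar *: p) /\
  forall a, 0 <= a -> inXZ (w + a *: p) -> a <= abar.

(* Discrete Search(atil, w, p, xi; alpha): alpha is the returned step *)
Definition discrete_search (atil : R) (w p : 'rV[R]_n) (xi : R) (alpha : R)
  : Prop :=
  exists abar, largest_step w p abar /\
    let a0 := Num.min abar atil in
    let st (i : nat) := Num.min abar (2 ^+ i * a0) in
    ( (0 < a0 /\ f (w + a0 *: p) <= f w - xi) /\
      exists j : nat, alpha = st j /\
        (forall i, (i <= j)%N -> f (w + st i *: p) <= f w - xi) /\
        (alpha = abar \/ f w - xi < f (w + st j.+1 *: p)) )
    \/
    ( ~ (0 < a0 /\ f (w + a0 *: p) <= f w - xi) /\ alpha = 0 ).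

(* One iteration k of DFNDFL, relating the iterates x_k, x~_k, y+_k, the
   parameters xi_k, the direction sets D_k and the tentative steps atil_k. *)
Definition dfndfl_iter (theta : R)
  (x xt yp : nat -> 'rV[R]_n) (xi : nat -> R)
  (D : nat -> seq 'rV[int]_n) (atil : nat -> 'rV[int]_n -> nat) (k : nat)
  : Prop :=
  (inXZ (xt k) /\ f (xt k) <= f (x k)) /\
  (* Phase 2.A : working set W of feasible directions of D_k, explored in
     some order ord; j failures, then either a success or exhaustion *)
  (let W := undup [seq d <- D k | `[< inXZ (xt k + dirR d) >]] in
   exists ord : seq 'rV[int]_n, perm_eq ord W /\
   exists j : nat, (j <= size ord)%N /\
     (forall i, (i < j)%N ->
        discrete_search (atil k (nth 0 ord i))%:R (xt k)
          (dirR (nth 0 ord i)) (xi k) 0) /\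
     ( ((j < size ord)%N /\ exists alpha, 0 < alpha /\
          discrete_search (atil k (nth 0 ord j))%:R (xt k)
            (dirR (nth 0 ord j)) (xi k) alpha /\
          yp k = xt k + alpha *: dirR (nth 0 ord j))
       \/ (j = size ord /\ yp k = xt k) ) /\
     (forall i, (i < j)%N ->
        atil k.+1 (nth 0 ord i) = maxn 1 (atil k (nth 0 ord i))./2) /\
     (forall d, d \in D k -> d \notin take j.+1 ord ->
        atil k.+1 d = atil k d) /\
   (let fail_all := yp k = xt k /\ (forall d, d \in W -> atil k d = 1%N) in
      (fail_all -> xi k.+1 = theta * xi k /\ {subset D k <= D k.+1} /\
                   (forall d, d \in D k.+1 -> primitive_dir d)) /\
      (~ fail_all -> xi k.+1 = xi k /\ D k.+1 = D k))) /\
  (inXZ (x k.+1) /\ f (x k.+1) <= f (yp k)).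

Definition dfndfl_run (theta : R)
  (x xt yp : nat -> 'rV[R]_n) (xi : nat -> R)
  (D : nat -> seq 'rV[int]_n) (atil : nat -> 'rV[int]_n -> nat) : Prop :=
  inXZ (x 0%N) /\ 0 < xi 0%N /\ 0 < theta < 1 /\
  (forall d, d \in D 0%N -> primitive_dir d) /\
  forall k, dfndfl_iter theta x xt yp xi D atil k.

End DFNDFL.

From HB Require Import structures.
From mathcomp Require Import all_boot all_order all_algebra.
From mathcomp Require Import all_classical all_reals all_analysis.
From mathcomp Require Import zify lra.

Set Implicit Arguments.
Unset Strict Implicit.
Import Order.TTheory GRing.Theory Num.Theory.
Import numFieldNormedType.Exports.
Local Open Scope ring_scope.
Local Open Scope classical_set_scope.

(* Every iteration of DFNDFL either decreases f by at least xi_k or does not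
   increase it.  If xi_k is reduced infinitely often, it is multiplied by
   theta infinitely often and, being nonincreasing, tends to 0.  Otherwise
   xi_k = xi_K and D_k = D_K for k >= K, and every unsuccessful iteration
   halves some tentative step different from 1, so that the potential
   sum_(d in D_K) atil_k(d) strictly decreases; hence f(x_k) drops by xi_K
   infinitely often, which contradicts the boundedness of the continuous f
   from below on the compact box X. *)

(* Halving maps a tentative step 0 to 1, so 0 must weigh more than 1. *)
Definition step_measure (a : nat) : nat := if a is 0 then 2 else a.

Lemma step_measure_halve_le (a : nat) :
  (step_measure (maxn 1 a./2) <= step_measure a)%N.
Proof.
case: a => [|[|a]] //=; rewrite (maxn_idPr _) // /step_measure.
by rewrite !ltnS leq_half_double -addnn; lia.
Qed.

Lemma step_measure_halve_lt (a : nat) :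
  a != 1%N -> (step_measure (maxn 1 a./2) < step_measure a)%N.
Proof.
case: a => [|[|a]] //= _; rewrite (maxn_idPr _) // /step_measure.
by rewrite !ltnS leq_half_double -addnn; lia.
Qed.

Lemma ltn_sum_seq (T : eqType) (s : seq T) (F G : T -> nat) (d0 : T) :
  uniq s -> {in s, forall d, F d <= G d}%N -> d0 \in s -> (F d0 < G d0)%N ->
  (\sum_(d <- s) F d < \sum_(d <- s) G d)%N.
Proof.
move=> s_uniq FleG d0s Flt.
rewrite (bigD1_seq d0) //= [X in (_ < X)%N](bigD1_seq d0) //= -addSn.
rewrite leq_add // big_seq_cond [X in (_ <= X)%N]big_seq_cond.
by apply: leq_sum => d /andP[/FleG].
Qed.

Section LexicographicDescent.
Variables (R : archiRealFieldType) (F : nat -> R) (P : nat -> nat) (c : R).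
Hypothesis c_gt0 : 0 < c.
Hypothesis descent :
  forall k, F k.+1 <= F k - c \/ F k.+1 <= F k /\ (P k.+1 < P k)%N.

Lemma descent_by_c_within k : exists j, F (k + j) <= F k - c.
Proof.
suff within : forall q k, (P k <= q)%N -> exists j, F (k + j) <= F k - c.
  exact: within _ k (leqnn _).
elim=> [|q IHq] {}k Pk_le.
  have [dec|[_ Plt]] := descent k; first by exists 1%N; rewrite addn1.
  by move: (leq_trans Plt Pk_le).
have [dec|[Fle Plt]] := descent k; first by exists 1%N; rewrite addn1.
have [j Fj] : exists j, F (k.+1 + j) <= F k.+1 - c.
  by apply: IHq; rewrite -ltnS (leq_trans Plt).
by exists j.+1; rewrite addnS -addSn (le_trans Fj) // lerD2r.
Qed.

Lemma descent_by_multiples (p : nat) : exists j, F j <= F 0%N - p%:R * c.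
Proof.
elim: p => [|p [j Fj]]; first by exists 0%N; rewrite mul0r subr0.
have [i Fi] := descent_by_c_within j.
by exists (j + i)%N; rewrite (le_trans Fi) // mulrSr; lra.
Qed.

Lemma descent_unbounded_below (m : R) : exists k, F k < m.
Proof.
have [j Fj] := descent_by_multiples (Num.trunc ((F 0%N - m) / c)).+1.
exists j; apply: le_lt_trans Fj _.
have := truncnS_gt ((F 0%N - m) / c); rewrite ltr_pdivrMr //; lra.
Qed.

End LexicographicDescent.

Lemma cvg0_nonincreasing_contracting (R : realType) (theta : R) (xi : R ^nat) :
  0 < theta < 1 -> (forall k, 0 <= xi k) -> (forall k, xi k.+1 <= xi k) ->
  (forall K, exists2 k, (K <= k)%N & xi k.+1 <= theta * xi k) ->
  xi @ \oo --> 0.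
Proof.
move=> /andP[theta_gt0 theta_lt1] xi_ge0 /nonincreasing_seqP xi_mono contracts.
have below_pow m : exists k, xi k <= theta ^+ m * xi 0%N.
  elim: m => [|m [k xik]]; first by exists 0%N; rewrite mul1r.
  have [k' kk' contr] := contracts k.
  exists k'.+1; rewrite (le_trans contr) // exprS -mulrA ler_pM2l //.
  exact: le_trans (xi_mono _ _ kk') xik.
apply/cvgrPdist_le => e e_gt0.
have /cvgrPdist_le/(_ e e_gt0)[N _ powN] :
    (fun m => theta ^+ m * xi 0%N) @ \oo --> 0.
  by rewrite -(mul0r (xi 0%N)); apply: cvgMl; apply: cvg_expr; rewrite gtr0_norm.
have [k xik] := below_pow N.
exists k => // t /= kt; rewrite sub0r normrN ger0_norm //.
have := powN N (leqnn N); rewrite /= sub0r normrN.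
by apply/le_trans/(le_trans (xi_mono _ _ kt))/(le_trans xik)/ler_norm.
Qed.

Lemma continuous_bounded_below_rV_box (R : realType) (n : nat)
    (l u : 'I_n -> R) (f : 'rV[R]_n -> R) :
  (forall i, l i <= u i) -> continuous f ->
  exists m, forall v : 'rV[R]_n, (forall i, l i <= v 0 i <= u i) -> m <= f v.
Proof.
move=> l_le_u f_cont.
pose box := [set v : 'rV[R]_n | forall i, `[l i, u i] (v ord0 i)].
have box_compact : compact box :=
  rV_compact (fun i => @segment_compact R (l i) (u i)).
have box_nonempty : box !=set0.
  by exists (\row_i l i) => i /=; rewrite mxE in_itv /= lexx l_le_u.
have [c _ c_min] :=
  EVT_min_rV box_nonempty box_compact (continuous_subspaceT f_cont).
exists (f c) => v v_box; apply: c_min; rewrite inE => i.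
by rewrite /= in_itv /=.
Qed.

Lemma discrete_search_decrease (R : realType) (n : nat) (Iz : {set 'I_n})
    (l u : 'I_n -> R) (f : 'rV[R]_n -> R) (atil xi alpha : R) (w p : 'rV[R]_n) :
  discrete_search Iz l u f atil w p xi alpha -> 0 < alpha ->
  f (w + alpha *: p) <= f w - xi.
Proof.
case=> abar [_ /= [[_ [j [-> [decrease _]]]] | [_ ->]]]; last by rewrite ltxx.
by move=> _; exact: decrease.
Qed.

Section DFNDFLRun.
Variables (R : realType) (n : nat) (Iz : {set 'I_n}) (l u : 'I_n -> R).
Variables (f : 'rV[R]_n -> R) (theta : R).
Variables (x xt yp : nat -> 'rV[R]_n) (xi : nat -> R).
Variables (D : nat -> seq 'rV[int]_n) (atil : nat -> 'rV[int]_n -> nat).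

Definition feasible_dirs (k : nat) : seq 'rV[int]_n :=
  undup [seq d <- D k | `[< inXZ Iz l u (xt k + dirR R d) >]].

Definition unit_step_failure (k : nat) : Prop :=
  yp k = xt k /\ {in feasible_dirs k, forall d, atil k d = 1%N}.

Definition step_potential (s : seq 'rV[int]_n) (k : nat) : nat :=
  \sum_(d <- s) step_measure (atil k d).

Lemma step_potential_halving_lt k (ord : seq 'rV[int]_n) :
  perm_eq ord (feasible_dirs k) ->
  {in ord, forall d, atil k.+1 d = maxn 1 (atil k d)./2} ->
  {in D k, forall d, d \notin ord -> atil k.+1 d = atil k d} ->
  ~ {in feasible_dirs k, forall d, atil k d = 1%N} ->
  (step_potential (undup (D k)) k.+1 < step_potential (undup (D k)) k)%N.
Proof.
move=> perm_ord halved kept not_all1.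
have [d0 d0_feas d0_ne1] : exists2 d, d \in feasible_dirs k & atil k d != 1%N.
  apply: contrapT => none; apply: not_all1 => d d_feas.
  by apply/eqP/negPn/negP => ne1; apply: none; exists d.
have feas_D d : d \in feasible_dirs k -> d \in D k.
  by rewrite mem_undup mem_filter => /andP[].
apply: (ltn_sum_seq (d0 := d0) (undup_uniq _)).
- move=> d; rewrite mem_undup => dD; have [d_ord|d_ord] := boolP (d \in ord).
    by rewrite halved // step_measure_halve_le.
  by rewrite kept.
- by rewrite mem_undup feas_D.
- by rewrite halved ?step_measure_halve_lt // (perm_mem perm_ord).
Qed.

Hypothesis run : dfndfl_run Iz l u f theta x xt yp xi D atil.

Let run_iter k : dfndfl_iter Iz l u f theta x xt yp xi D atil k := run.2.2.2.2 k.

Lemma dfndfl_x_inXZ k : inXZ Iz l u (x k).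
Proof. by case: k => [|k]; [exact: run.1 | case: (run_iter k) => _ [_ []]]. Qed.

Lemma dfndfl_xi_shrink k : unit_step_failure k -> xi k.+1 = theta * xi k.
Proof.
by case: (run_iter k) => _ [[ord [_ [j [_ [_ [_ [_ [_ [shrink _]]]]]]]]] _] /shrink[].
Qed.

Lemma dfndfl_stall k : ~ unit_step_failure k -> xi k.+1 = xi k /\ D k.+1 = D k.
Proof.
by case: (run_iter k) => _ [[ord [_ [j [_ [_ [_ [_ [_ [_ stall]]]]]]]]] _] /stall.
Qed.

Lemma dfndfl_xi_gt0 k : 0 < xi k.
Proof.
have [_ [xi0_gt0 [/andP[theta_gt0 _] _]]] := run.
elim: k => [//|k IHk]; have [fail|no_fail] := pselect (unit_step_failure k).
  by rewrite dfndfl_xi_shrink // mulr_gt0.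
by rewrite (dfndfl_stall no_fail).1.
Qed.

Lemma dfndfl_xi_le k : xi k.+1 <= xi k.
Proof.
have [_ [_ [/andP[_ theta_lt1] _]]] := run.
have [fail|no_fail] := pselect (unit_step_failure k).
  by rewrite dfndfl_xi_shrink // ger_pMl ?dfndfl_xi_gt0 // ltW.
by rewrite (dfndfl_stall no_fail).1.
Qed.

Lemma dfndfl_eventually_stalled K :
  (forall k, (K <= k)%N -> ~ unit_step_failure k) ->
  forall j, xi (K + j)%N = xi K /\ D (K + j)%N = D K.
Proof.
move=> stalled; elim=> [|j [xiKj DKj]]; first by rewrite addn0.
by rewrite addnS; have [-> ->] := dfndfl_stall (stalled _ (leq_addr j K)).
Qed.

Lemma dfndfl_descent k :
  f (x k.+1) <= f (x k) - xi k \/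
  f (x k.+1) <= f (x k) /\ (~ unit_step_failure k ->
    (step_potential (undup (D k)) k.+1 < step_potential (undup (D k)) k)%N).
Proof.
case: (run_iter k) => [[_ fxt_le] [[ord [perm_ord [j [_ [_ [branch
  [halved [kept _]]]]]]]] [_ fx_le]]].
case: branch => [[_ [alpha [alpha_gt0 [search yp_eq]]]] | [j_eq yp_eq]].
  left; rewrite yp_eq in fx_le; apply: (le_trans fx_le).
  by apply: (le_trans (discrete_search_decrease search alpha_gt0)); rewrite lerD2r.
right; split; first by rewrite (le_trans fx_le) // yp_eq.
move=> no_fail; apply: (step_potential_halving_lt perm_ord).
- move=> d d_ord; rewrite -(nth_index 0 d_ord).
  by apply: halved; rewrite j_eq index_mem.
- by move=> d dD d_ord; apply: kept; rewrite // j_eq take_oversize.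
- by move=> all1; apply: no_fail.
Qed.

End DFNDFLRun.

Theorem mainTheorem8 (R : realType) (n : nat) (Iz : {set 'I_n})
  (l u : 'I_n -> R)
  (hlu : forall i, l i < u i)
  (hint : forall i, i \in Iz -> l i \is a Num.int /\ u i \is a Num.int)
  (f : 'rV[R]_n -> R)
  (hf : continuous f)
  (hLip : exists L : R, forall x y : 'rV[R]_n,
      inXZ Iz l u x -> inXZ Iz l u y ->
      (forall i, i \in Iz -> x 0 i = y 0 i) ->
      `|f x - f y| <= L * `|x - y|)
  (theta : R) (x xt yp : nat -> 'rV[R]_n) (xi : nat -> R)
  (D : nat -> seq 'rV[int]_n) (atil : nat -> 'rV[int]_n -> nat)
  (hrun : dfndfl_run Iz l u f theta x xt yp xi D atil) :
  xi @ \oo --> 0.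
Proof.
pose fail := unit_step_failure Iz l u xt yp D atil.
have [inf_fail|fin_fail] := pselect (forall K, exists2 k, (K <= k)%N & fail k).
  apply: cvg0_nonincreasing_contracting (hrun.2.2.1) _ _ _ => [k|k|K].
  - exact/ltW/(dfndfl_xi_gt0 hrun).
  - exact: dfndfl_xi_le hrun k.
  - have [k Kk fail_k] := inf_fail K.
    by exists k; rewrite // (dfndfl_xi_shrink hrun fail_k).
have [K stalled] : exists K, forall k, (K <= k)%N -> ~ fail k.
  apply: contrapT => no_K; apply: fin_fail => K; apply: contrapT => no_k.
  by apply: no_K; exists K => k Kk fail_k; apply: no_k; exists k.
have [m f_ge_m] := continuous_bounded_below_rV_box (fun i => ltW (hlu i)) hf.
pose F j := f (x (K + j)%N).
pose P j := step_potential atil (undup (D K)) (K + j).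
have descent j : F j.+1 <= F j - xi K \/ F j.+1 <= F j /\ (P j.+1 < P j)%N.
  have [xiKj DKj] := dfndfl_eventually_stalled hrun stalled j.
  rewrite /F /P addnS -xiKj -DKj.
  have [|[fx_le pot_lt]] := dfndfl_descent hrun (K + j); [by left | right].
  by split=> //; apply: pot_lt; apply: stalled; rewrite leq_addr.
have [j] := descent_unbounded_below (dfndfl_xi_gt0 hrun K) descent m.
by rewrite ltNge f_ge_m // => i; have [] := dfndfl_x_inXZ hrun (K + j) i.
Qed.
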